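(* For $b,c\in(-1,\infty)$, with $f$ as defined in the context: (1) if $b=c$, then $f(b,c)=1$; (2) if $b>c$, then $\left(\frac{c+1}{b+1}\right)^2<f(b,c)<1$; (3) if $b<c$, then $1<f(b,c)<\left(\frac{c+1}{b+1}\right)^2$.
   Context: Let $u_n=(-1)^{s_2(n)}$, where $s_2(n)$ is the sum of the binary digits of the non-negative integer $n$ (Thue–Morse sequence with values $\pm1$). For $b,c\in\mathbb C\setminus\{-1,-2,-3,\dots\}$ define $f(b,c)=\prod_{n=1}^\infty\left(\frac{n+b}{n+c}\right)^{u_n}$ (limit of partial products; this converges for all such $b,c$). *)

From Stdlib Require Import Reals Lra Lia.
From Coquelicot Require Import Coquelicot.
Open Scope R_scope.

Fixpoint bin_digit_sum_aux (fuel n : nat) : nat :=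
  match fuel with
  | O => O
  | S f => match n with
           | O => O
           | _ => (n mod 2 + bin_digit_sum_aux f (n / 2))%nat
           end
  end.
Definition s2 (n : nat) : nat := bin_digit_sum_aux n n.

Definition tm (n : nat) : R := (-1) ^ (s2 n).

(* ((n+b)/(n+c))^{u_n}; since u_n = +-1 this is the ratio or its inverse *)
Definition tm_factor (b c : R) (n : nat) : R :=
  if Nat.even (s2 n) then (INR n + b) / (INR n + c) else (INR n + c) / (INR n + b).

Fixpoint tm_partial (b c : R) (N : nat) : R :=
  match N with
  | O => 1
  | S M => tm_partial b c M * tm_factor b c (S M)
  end.

Definition f_tm (b c : R) : Rbar := Lim_seq (tm_partial b c).

From Stdlib Require Import Reals Lra Lia.
From Coquelicot Require Import Coquelicot.
Open Scope R_scope.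

(* For b > c the sequence g(n) = ln((n+b)/(n+c)) is positive, decreasing and tends to 0, and
   ln P_N = sum_{n<=N} u_n g(n).  Since u_1 = -1 and u_{2j+1} = -u_{2j}, the partial sums of
   (u_n)_{n>=2} lie in [-1, 1], so Abel summation makes sum_{n>=2} u_n g(n) converge to a value
   in [-g(2), g(2)].  As g(2) < g(1), ln f(b,c) lies strictly between -2 g(1) and 0, and
   exp g(1) = (b+1)/(c+1).  The case b < c follows from f(b,c) = 1 / f(c,b). *)

(* [sum_Sn] at type R rather than [R_AbelianMonoid], so that [ring] accepts the result. *)
Lemma sum_Sn_R (a : nat -> R) N : sum_n a (S N) = sum_n a N + a (S N) :> R.
Proof. exact (sum_Sn a N). Qed.

Lemma sum_n_telescope (u : nat -> R) N :
  sum_n (fun n => u n - u (S n)) N = u 0%nat - u (S N) :> R.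
Proof.
  induction N as [|N IH].
  - now rewrite sum_O.
  - rewrite sum_Sn_R, IH. ring.
Qed.

Section AbelSummation.

Variables (e g : nat -> R) (m M : R).
Hypothesis partial_sums_bounded : forall N, m <= sum_n e N <= M.
Hypothesis g_nonincreasing : forall n, g (S n) <= g n.

Lemma abel_partial_sum_remainder N :
  m * (g 0%nat - g N) <= sum_n (fun k => e k * g k) N - sum_n e N * g N
  <= M * (g 0%nat - g N).
Proof.
  induction N as [|N IH].
  - rewrite !sum_O. lra.
  - rewrite !sum_Sn_R.
    pose proof (partial_sums_bounded N) as HA. pose proof (g_nonincreasing N).
    assert (m * (g N - g (S N)) <= sum_n e N * (g N - g (S N)) <= M * (g N - g (S N)))
      by (split; apply Rmult_le_compat_r; lra).
    lra.
Qed.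

Hypothesis g_lim : is_lim_seq g 0.

Lemma abel_partial_sum_bounds N :
  m * g 0%nat <= sum_n (fun k => e k * g k) N <= M * g 0%nat.
Proof.
  pose proof (is_lim_seq_decr_compare g 0 g_lim g_nonincreasing N).
  pose proof (abel_partial_sum_remainder N). pose proof (partial_sums_bounded N).
  assert (m * g N <= sum_n e N * g N <= M * g N) by (split; apply Rmult_le_compat_r; lra).
  lra.
Qed.

Lemma abel_series_bounds :
  exists L : R, is_lim_seq (sum_n (fun k => e k * g k)) L /\ m * g 0%nat <= L <= M * g 0%nat.
Proof.
  assert (Hconv : ex_series (fun k => scal (g k) (e k))).
  { apply partial_summation_R.
    - exists (Rabs m + Rabs M). intro N. pose proof (partial_sums_bounded N).
      unfold norm; simpl. unfold abs; simpl.
      apply Rabs_le_between; split_Rabs; lra.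
    - exact g_lim.
    - exists (g 0%nat).
      apply (is_series_ext (fun k => g k - g (S k))).
      { intro k. unfold norm, minus, plus, opp; simpl. unfold abs; simpl.
        rewrite Rabs_left1; [ring|]. pose proof (g_nonincreasing k). lra. }
      change (is_lim_seq (sum_n (fun k => g k - g (S k))) (g 0%nat)).
      apply (is_lim_seq_ext (fun N => g 0%nat - g (S N))).
      { intro N. symmetry. apply sum_n_telescope. }
      replace (Finite (g 0%nat)) with (Rbar_minus (g 0%nat) 0) by (simpl; f_equal; ring).
      apply is_lim_seq_minus'; [apply is_lim_seq_const|].
      now apply is_lim_seq_incr_1 in g_lim. }
  destruct Hconv as [L HL]. exists L.
  assert (Hsum : is_lim_seq (sum_n (fun k => e k * g k)) L).
  { apply (is_lim_seq_ext (sum_n (fun k => scal (g k) (e k)))); [|exact HL].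
    intro N. apply sum_n_ext. intro k. unfold scal; simpl. unfold mult; simpl. ring. }
  split; [exact Hsum|]. split.
  - apply (is_lim_seq_le (fun _ => m * g 0%nat) _ (m * g 0%nat) L
             (fun N => proj1 (abel_partial_sum_bounds N)) (is_lim_seq_const _) Hsum).
  - apply (is_lim_seq_le _ (fun _ => M * g 0%nat) L (M * g 0%nat)
             (fun N => proj2 (abel_partial_sum_bounds N)) Hsum (is_lim_seq_const _)).
Qed.

End AbelSummation.

Lemma bin_digit_sum_aux_fuel f f' n : (n <= f)%nat -> (n <= f')%nat ->
  bin_digit_sum_aux f n = bin_digit_sum_aux f' n.
Proof.
  revert f' n. induction f as [|f IH]; intros f' n Hf Hf'.
  - replace n with 0%nat by lia. now destruct f'.
  - destruct f' as [|f']; [replace n with 0%nat by lia; reflexivity|].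
    destruct n as [|n]; [reflexivity|].
    assert (Nat.div (S n) 2 < S n)%nat by (apply Nat.div_lt; lia).
    cbn [bin_digit_sum_aux]. f_equal. apply IH; lia.
Qed.

Lemma s2_div2 n : s2 n = (n mod 2 + s2 (n / 2))%nat.
Proof.
  destruct n as [|n]; [reflexivity|].
  assert (Nat.div (S n) 2 <= n)%nat by (apply Nat.lt_succ_r, Nat.div_lt; lia).
  unfold s2 at 1. cbn [bin_digit_sum_aux]. f_equal.
  apply bin_digit_sum_aux_fuel; lia.
Qed.

Lemma tm_succ_double j : tm (S (2 * j)) = - tm (2 * j).
Proof.
  unfold tm. rewrite (s2_div2 (S (2 * j))), (s2_div2 (2 * j)).
  replace (S (2 * j) mod 2)%nat with 1%nat by (apply (Nat.mod_unique _ _ j); lia).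
  replace (S (2 * j) / 2)%nat with j by (apply (Nat.div_unique _ _ _ 1); lia).
  replace (2 * j mod 2)%nat with 0%nat by (apply (Nat.mod_unique _ _ j); lia).
  replace (2 * j / 2)%nat with j by (apply (Nat.div_unique _ _ _ 0); lia).
  simpl. ring.
Qed.

Lemma tm_tail_sums_pairs j :
  sum_n (fun k => tm (S (S k))) (2 * j) = tm (S (S (2 * j))) :> R /\
  sum_n (fun k => tm (S (S k))) (S (2 * j)) = 0 :> R.
Proof.
  assert (Hodd : forall i,
            sum_n (fun k => tm (S (S k))) (2 * i) = tm (S (S (2 * i))) :> R ->
            sum_n (fun k => tm (S (S k))) (S (2 * i)) = 0 :> R).
  { intros i Hi. rewrite sum_Sn_R, Hi.
    replace (S (S (S (2 * i)))) with (S (2 * S i)) by lia.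
    replace (S (S (2 * i))) with (2 * S i)%nat by lia.
    rewrite tm_succ_double. ring. }
  induction j as [|j [_ IH]].
  - split; [now rewrite sum_O|]. apply Hodd. now rewrite sum_O.
  - assert (Heven : sum_n (fun k => tm (S (S k))) (2 * S j) = tm (S (S (2 * S j))) :> R).
    { replace (2 * S j)%nat with (S (S (2 * j))) by lia.
      rewrite sum_Sn_R, IH. ring. }
    split; [exact Heven | now apply Hodd].
Qed.

Lemma tm_tail_sums_bounded N : -1 <= sum_n (fun k => tm (S (S k))) N <= 1.
Proof.
  destruct (Nat.Even_or_Odd N) as [[j ->]|[j ->]].
  - rewrite (proj1 (tm_tail_sums_pairs j)).
    apply Rabs_le_between. unfold tm. rewrite pow_1_abs. lra.
  - rewrite Nat.add_1_r, (proj2 (tm_tail_sums_pairs j)). lra.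
Qed.

Definition log_ratio (b c : R) (n : nat) : R := ln ((INR n + b) / (INR n + c)).

Lemma INR_plus_pos x n : -1 < x -> (1 <= n)%nat -> 0 < INR n + x.
Proof. intros Hx Hn. apply le_INR in Hn. simpl in Hn. lra. Qed.

Section TmPartialProducts.

Variables b c : R.
Hypothesis hb : -1 < b.
Hypothesis hc : -1 < c.

Lemma ratio_pos n : (1 <= n)%nat -> 0 < (INR n + b) / (INR n + c).
Proof. intro Hn. apply Rdiv_lt_0_compat; apply INR_plus_pos; assumption. Qed.

Lemma tm_factor_exp n : (1 <= n)%nat -> tm_factor b c n = exp (tm n * log_ratio b c n).
Proof.
  intro Hn. pose proof (ratio_pos n Hn) as Hr. unfold tm_factor, tm, log_ratio.
  set (r := (INR n + b) / (INR n + c)) in *.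
  destruct (Nat.even (s2 n)) eqn:Hev.
  - apply Nat.even_spec in Hev as [k ->]. now rewrite pow_1_even, Rmult_1_l, exp_ln.
  - assert (Hodd : Nat.odd (s2 n) = true) by (now rewrite <- Nat.negb_even, Hev).
    apply Nat.odd_spec in Hodd as [k ->].
    rewrite Nat.add_1_r, pow_1_odd.
    replace (-1 * ln r) with (- ln r) by ring.
    rewrite exp_Ropp, exp_ln by exact Hr. symmetry. apply Rinv_div.
Qed.

Lemma tm_partial_succ_succ N :
  tm_partial b c (S (S N)) =
  (c + 1) / (b + 1) * exp (sum_n (fun k => tm (S (S k)) * log_ratio b c (S (S k))) N).
Proof.
  induction N as [|N IH].
  - rewrite sum_O. change (tm_partial b c 2) with (1 * tm_factor b c 1 * tm_factor b c 2).
    rewrite (tm_factor_exp 2) by lia. unfold tm_factor. simpl. field; lra.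
  - change (tm_partial b c (S (S (S N))))
      with (tm_partial b c (S (S N)) * tm_factor b c (S (S (S N)))).
    rewrite IH, sum_Sn_R, exp_plus, (tm_factor_exp (S (S (S N)))) by lia. ring.
Qed.

Lemma log_ratio_lim : is_lim_seq (fun n => log_ratio b c (S n)) 0.
Proof.
  rewrite <- ln_1. apply is_lim_seq_continuous.
  { apply continuity_pt_filterlim, continuous_ln. lra. }
  apply (is_lim_seq_ext (fun n => 1 + (b - c) * / (INR (S n) + c))).
  { intro n. pose proof (INR_plus_pos c (S n) hc ltac:(lia)). field. lra. }
  replace (Finite 1) with (Finite (1 + (b - c) * 0)) by (f_equal; ring).
  apply is_lim_seq_plus'; [apply is_lim_seq_const|].
  apply (is_lim_seq_scal_l _ (b - c) 0), (is_lim_seq_inv _ p_infty); [|discriminate].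
  apply (is_lim_seq_incr_1 (fun n => INR n + c)).
  eapply is_lim_seq_plus; [apply is_lim_seq_INR | apply is_lim_seq_const | reflexivity].
Qed.

Lemma exp_log_ratio_1 : exp (log_ratio b c 1) = (b + 1) / (c + 1).
Proof. unfold log_ratio. rewrite exp_ln by (apply ratio_pos; lia). simpl. f_equal; ring. Qed.

Hypothesis hcb : c < b.

Lemma log_ratio_decreasing n : (1 <= n)%nat -> log_ratio b c (S n) < log_ratio b c n.
Proof.
  intro Hn. pose proof (INR_plus_pos c n hc Hn). pose proof (ratio_pos (S n) ltac:(lia)).
  unfold log_ratio. rewrite S_INR in *.
  apply ln_increasing; [assumption|].
  apply (Rmult_lt_reg_r ((INR n + c) * (INR n + 1 + c))).
  - apply Rmult_lt_0_compat; lra.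
  - field_simplify; lra.
Qed.

Lemma tm_partial_lim_below_1 :
  exists l : R, is_lim_seq (tm_partial b c) l /\ ((c + 1) / (b + 1)) ^ 2 < l < 1.
Proof.
  set (g := fun k => log_ratio b c (S (S k))).
  assert (g_nonincreasing : forall k, g (S k) <= g k)
    by (intro k; left; apply log_ratio_decreasing; lia).
  assert (g_lim : is_lim_seq g 0)
    by (apply (is_lim_seq_incr_1 (fun n => log_ratio b c (S n))), log_ratio_lim).
  destruct (abel_series_bounds _ g (-1) 1 tm_tail_sums_bounded g_nonincreasing g_lim)
    as [L [HL HLbounds]].
  exists ((c + 1) / (b + 1) * exp L). split.
  - apply is_lim_seq_incr_1, is_lim_seq_incr_1.
    apply (is_lim_seq_ext
             (fun N => (c + 1) / (b + 1) * exp (sum_n (fun k => tm (S (S k)) * g k) N))).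
    { intro N. symmetry. apply tm_partial_succ_succ. }
    apply (is_lim_seq_scal_l _ _ (exp L)), is_lim_seq_continuous; [|exact HL].
    apply derivable_continuous_pt, derivable_pt_exp.
  - pose proof (log_ratio_decreasing 1 (le_n 1)) as H21. unfold g in HLbounds.
    assert (Hr : 0 < (c + 1) / (b + 1)) by (apply Rdiv_lt_0_compat; lra).
    split.
    + apply (Rle_lt_trans _ ((c + 1) / (b + 1) * exp (- log_ratio b c 1))).
      * rewrite exp_Ropp, exp_log_ratio_1. right. field. lra.
      * apply Rmult_lt_compat_l, exp_increasing; lra.
    + apply (Rlt_le_trans _ ((c + 1) / (b + 1) * exp (log_ratio b c 1))).
      * apply Rmult_lt_compat_l, exp_increasing; lra.
      * rewrite exp_log_ratio_1. right. field. lra.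
Qed.

End TmPartialProducts.

Lemma tm_partial_diag b N : -1 < b -> tm_partial b b N = 1.
Proof.
  intro hb. induction N as [|N IH]; [reflexivity|].
  change (tm_partial b b (S N)) with (tm_partial b b N * tm_factor b b (S N)).
  pose proof (INR_plus_pos b (S N) hb ltac:(lia)).
  rewrite IH. unfold tm_factor. destruct (Nat.even (s2 (S N))); field; lra.
Qed.

Lemma tm_partial_swap b c N : tm_partial b c N = / tm_partial c b N.
Proof.
  induction N as [|N IH]; [simpl; now rewrite Rinv_1|].
  change (tm_partial b c (S N)) with (tm_partial b c N * tm_factor b c (S N)).
  change (tm_partial c b (S N)) with (tm_partial c b N * tm_factor c b (S N)).
  rewrite IH, Rinv_mult. f_equal. unfold tm_factor.
  destruct (Nat.even (s2 (S N))); symmetry; apply Rinv_div.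
Qed.

Lemma tm_partial_lim_above_1 b c : -1 < b -> -1 < c -> b < c ->
  exists l : R, is_lim_seq (tm_partial b c) l /\ 1 < l < ((c + 1) / (b + 1)) ^ 2.
Proof.
  intros hb hc hbc.
  destruct (tm_partial_lim_below_1 c b hc hb hbc) as [l [Hl [Hlow Hup]]].
  assert (Hpos : 0 < ((b + 1) / (c + 1)) ^ 2) by (apply pow_lt, Rdiv_lt_0_compat; lra).
  exists (/ l). split.
  - apply (is_lim_seq_ext (fun N => / tm_partial c b N)).
    { intro N. symmetry. apply tm_partial_swap. }
    apply (is_lim_seq_inv _ l Hl). intro E. injection E. lra.
  - split.
    + rewrite <- Rinv_1. apply Rinv_lt_contravar; lra.
    + replace (((c + 1) / (b + 1)) ^ 2) with (/ ((b + 1) / (c + 1)) ^ 2) by (field; lra).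
      apply Rinv_lt_contravar; [apply Rmult_lt_0_compat|]; lra.
Qed.

Theorem lemma5 (b c : R) (hb : -1 < b) (hc : -1 < c) :
  ex_finite_lim_seq (tm_partial b c) /\
  (b = c -> f_tm b c = Finite 1) /\
  (b > c -> ((c + 1) / (b + 1)) ^ 2 < real (f_tm b c) < 1) /\
  (b < c -> 1 < real (f_tm b c) < ((c + 1) / (b + 1)) ^ 2).
Proof.
  assert (f_tm_lim : forall l : R, is_lim_seq (tm_partial b c) l -> f_tm b c = Finite l)
    by (intros l Hl; exact (is_lim_seq_unique _ _ Hl)).
  destruct (Rtotal_order b c) as [Hlt|[<-|Hgt]].
  - destruct (tm_partial_lim_above_1 b c hb hc Hlt) as [l [Hl Hbounds]].
    rewrite (f_tm_lim l Hl). simpl.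
    repeat split; try (exists l; exact Hl); intros; lra.
  - assert (Hl : is_lim_seq (tm_partial b b) 1).
    { apply (is_lim_seq_ext (fun _ => 1)); [|apply is_lim_seq_const].
      intro N. symmetry. now apply tm_partial_diag. }
    rewrite (f_tm_lim 1 Hl). simpl.
    repeat split; try (exists 1; exact Hl); intros; lra.
  - destruct (tm_partial_lim_below_1 b c hb hc Hgt) as [l [Hl Hbounds]].
    rewrite (f_tm_lim l Hl). simpl.
    repeat split; try (exists l; exact Hl); intros; lra.
Qed.
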